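(* Let $V$ be a population of $n$ individuals with pseudo-metric $d$, and let $k_1\le k_2$ be panel sizes. Let $\mathcal{G}$ and $\mathcal{H}$ be the outputs of the Greedy Capture procedure (defined in the context) with panel sizes $k_1$ and $k_2$ respectively. Then for every group $G\in\mathcal{G}$ with center $c_G$ and radius $r_G$ there exists a group $H\in\mathcal{H}$ with center $c_H$ and radius $r_H$ such that $d(c_H,c_G)\le 2r_G$ and $r_H\le r_G$.
   Context: $B(x,\delta)=\{u\in V: d(x,u)\le\delta\}$. Greedy Capture with panel size $K$ (Modified Greedy Capture with every individual initially its own group): maintain a set $U$ of uncovered individuals, initially $V$, and an output collection initially empty; increase $\delta$ continuously from $0$ while $U\ne\emptyset$. At each $\delta$: for each already formed group with center $c$, remove $U\cap B(c,\delta)$ from $U$; then, while some $x\in V$ has $|U\cap B(x,\delta)|\ge n/K$, form the group $U\cap B(x,\delta)$ with center $x$ and radius $\delta$, add it to the output and remove its members from $U$. Return the output collection. *)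

From mathcomp Require Import all_boot all_order all_algebra.
Set Implicit Arguments. Unset Strict Implicit. Unset Printing Implicit Defensive.
Import Order.TTheory GRing.Theory Num.Theory.
Local Open Scope ring_scope.

Definition pseudometric (R : realFieldType) (V : finType) (d : V -> V -> R) :=
  [/\ forall x, d x x = 0,
      forall x y, 0 <= d x y,
      forall x y, d x y = d y x
    & forall x y z, d x z <= d x y + d y z].

Definition ball (R : realFieldType) (V : finType) (d : V -> V -> R)
  (x : V) (delta : R) : {set V} := [set u | d x u <= delta].

Definition group (R : realFieldType) (V : finType) := ({set V} * V * R)%type.

Definition gmembers (R : realFieldType) (V : finType) (g : group R V) : {set V} := g.1.1.
Definition gcenter (R : realFieldType) (V : finType) (g : group R V) : V := g.1.2.
Definition gradius (R : realFieldType) (V : finType) (g : group R V) : R := g.2.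

(* The set of points covered (removed from U) at parameter delta by the
   groups of the sequence gs that were formed at a radius <= delta:
   every such group with center c has swallowed U ∩ B(c, delta'),
   for all delta' <= delta, hence covers exactly B(c, delta). *)
Definition covered (R : realFieldType) (V : finType) (d : V -> V -> R) (gs : seq (group R V)) (delta : R)
  : {set V} :=
  \bigcup_(g <- gs | gradius g <= delta) ball d (gcenter g) delta.

(* [gc_run d K out] : [out] is (in order of formation) the output collection
   of a run of Greedy Capture with panel size K on (V, d), n = #|V|.
   - groups are formed at nondecreasing values of delta >= 0;
   - the i-th group, formed at delta = r_i with center c_i, is
     U ∩ B(c_i, r_i), where U is the uncovered set at that moment, i.e.
     V minus the balls B(c_j, r_i) of the previously formed groups, and it
     has at least n/K members (condition of the while loop);
   - the while loop only stops when no x qualifies: at every delta >= 0,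
     after all groups formed at radius <= delta, no x has
     |U ∩ B(x, delta)| >= n/K. *)
Definition gc_run (R : realFieldType) (V : finType) (d : V -> V -> R)
  (K : nat) (out : seq (group R V)) : Prop :=
  let thr : R := (#|V|%:R / K%:R) in
  [/\ sorted <=%R (map (@gradius R V) out),
      all (fun g => 0 <= gradius g) out,
      (forall (pre post : seq (group R V)) (g : group R V),
         out = pre ++ g :: post ->
         gmembers g = ball d (gcenter g) (gradius g)
                        :\: \bigcup_(h <- pre)
                               ball d (gcenter h) (gradius g)
         /\ thr <= #|gmembers g|%:R)
    & forall delta : R, 0 <= delta -> forall x : V,
         #|ball d x delta :\: covered d out delta|%:R < thr].

From mathcomp Require Import all_boot all_order all_algebra.
Set Implicit Arguments. Unset Strict Implicit. Unset Printing Implicit Defensive.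
Import Order.TTheory GRing.Theory Num.Theory.
Local Open Scope ring_scope.

(* G has at least n/k1 >= n/k2 members, all within B(c_G, r_G).  A ball of that
   size cannot be entirely uncovered at delta = r_G when the k2-run stops, so some
   u in B(c_G, r_G) lies in B(c_H, r_G) for a group H with r_H <= r_G, and
   d(c_H, c_G) <= d(c_H, u) + d(u, c_G) <= 2 r_G. *)

Lemma ler_wpdiv_nat (R : numFieldType) (a : R) (k1 k2 : nat) :
  0 <= a -> (0 < k1)%N -> (k1 <= k2)%N -> a / k2%:R <= a / k1%:R.
Proof.
move=> a_ge0 k1_gt0 le_k12; apply: ler_wpM2l => //.
by rewrite lef_pV2 ?ler_nat // posrE ltr0n // (leq_trans k1_gt0).
Qed.

Section GreedyCapture.

Variables (R : realFieldType) (V : finType) (d : V -> V -> R).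

Lemma covered_mem_ball (gs : seq (group R V)) delta u :
  u \in covered d gs delta ->
  exists2 g, g \in gs & (gradius g <= delta) && (u \in ball d (gcenter g) delta).
Proof.
rewrite /covered big_seq_cond.
elim/big_rec: _ => [|g X /andP[g_gs g_le] IH /setUP[u_g|/IH//]]; first by rewrite inE.
by exists g; rewrite ?g_le.
Qed.

Lemma ball_triangle x y delta u :
  pseudometric d -> u \in ball d x delta -> u \in ball d y delta ->
  d x y <= 2 * delta.
Proof.
case=> _ _ d_sym d_tri; rewrite !inE => xu yu.
by rewrite mulr2n mulrDl mul1r (le_trans (d_tri _ u _)) // lerD // d_sym.
Qed.

Section Run.

Variables (K : nat) (out : seq (group R V)).
Hypothesis run : gc_run d K out.

Lemma gc_run_radius_ge0 (g : group R V) : g \in out -> 0 <= gradius g.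
Proof. by case: run => _ /allP out_ge0 _ _ /out_ge0. Qed.

Lemma gc_run_card_ball (g : group R V) :
  g \in out -> #|V|%:R / K%:R <= #|ball d (gcenter g) (gradius g)|%:R :> R.
Proof.
case: run => _ _ out_groups _ g_out.
case/splitPr def_out: {1}out / g_out => [pre post].
have [-> card_g] := out_groups pre post g def_out.
by rewrite (le_trans card_g) // ler_nat subset_leq_card // subsetDl.
Qed.

Lemma gc_run_ball_meets_covered x delta :
  0 <= delta -> #|V|%:R / K%:R <= #|ball d x delta|%:R :> R ->
  exists2 u, u \in ball d x delta & u \in covered d out delta.
Proof.
case: run => _ _ _ stop delta_ge0 large.
have /subsetPn[u ux]: ~~ (ball d x delta \subset ball d x delta :\: covered d out delta).
  apply/negP => /subset_leq_card; rewrite -(ler_nat R) => sub.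
  by have := le_lt_trans (le_trans large sub) (stop _ delta_ge0 x); rewrite ltxx.
by rewrite inE ux andbT negbK; exists u.
Qed.

End Run.

End GreedyCapture.

Theorem lemma5 (R : realFieldType) (V : finType) (d : V -> V -> R)
  (k1 k2 : nat) (Gs Hs : seq (group R V)) :
  pseudometric d -> (0 < k1)%N -> (k1 <= k2)%N ->
  gc_run d k1 Gs -> gc_run d k2 Hs ->
  forall G, G \in Gs ->
    exists2 H, H \in Hs &
      d (gcenter H) (gcenter G) <= 2 * gradius G /\ gradius H <= gradius G.
Proof.
move=> d_pm k1_gt0 le_k12 runG runH G G_Gs.
have large : #|V|%:R / k2%:R <= #|ball d (gcenter G) (gradius G)|%:R :> R.
  rewrite (le_trans (ler_wpdiv_nat (ler0n _ _) k1_gt0 le_k12)) //.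
  exact: (gc_run_card_ball runG G_Gs).
have [u uG /covered_mem_ball[H H_Hs /andP[rH_le uH]]] :=
  gc_run_ball_meets_covered runH (gc_run_radius_ge0 runG G_Gs) large.
by exists H => //; split => //; apply: ball_triangle d_pm uH uG.
Qed.
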